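(* Let $(M,T)$ be an object of $\mathbb T({}_H\mathcal M)$. Then $(M,T)\cong(H\triangleright T(M),T)$ in $\mathbb T({}_H\mathcal M)$, where $H\triangleright T(M)$ is the $H$-submodule of $M$ generated by $T(M)$, equipped with the restriction of $T$. Consequently, if $M'\subseteq M$ is an $H$-submodule with $T(M')=0$, then $(M,T)\cong(M/M',T)$, where $T$ also denotes the projection induced on $M/M'$.
   Context: Throughout, $k$ is a field and $H$ is a Hopf algebra over $k$ with bijective antipode $S$ and Sweedler notation $\Delta(h)=h_{(1)}\otimes h_{(2)}$. For a left $H$-module $M$ (action $\triangleright$) and linear $T:M\to M$, put $T_h(m)=h_{(1)}\triangleright T(S(h_{(2)})\triangleright m)$. A projection $T$ ($T^2=T$) satisfies the c-condition if $T_h\circ T=T\circ T_h$ for all $h$. The category $\mathbb T({}_H\mathcal M)$ is defined as follows: - objects are pairs $(M,T)$ with $M$ a left $H$-module and $T$ a linear projection on $M$ satisfying the c-condition; - morphisms $f:(M,T)\to(N,S)$ are linear maps $f:T(M)\to S(N)$ with $f(T(h\triangleright m))=S(h\triangleright f(m))$ for all $h\in H$, $m\in T(M)$. *)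

From HB Require Import structures.
From mathcomp Require Import all_boot all_order all_algebra.
From mathcomp Require Import boolp.
Set Implicit Arguments.
Unset Strict Implicit.
Unset Printing Implicit Defensive.
Import GRing.Theory.
Local Open Scope ring_scope.

(* Hopf algebras.  There is no tensor-product library for (possibly          *)
(* infinite-dimensional) vector spaces, so an element of H (x) H is          *)
(* represented by a finite list of pairs (a_i, b_i) standing for             *)
(* sum_i a_i (x) b_i.  Two such lists denote the same tensor iff every       *)
(* bilinear form H x H -> k takes the same value on them (universal property *)
(* of H (x) H, and the dual of a vector space separates points).  Likewise   *)
(* for H (x) H (x) H with trilinear forms.  Sweedler notation:               *)
(* Delta(h) = sum_(p <- cop h) p.1 (x) p.2.                                  *)
Section HopfDef.
Variables (k : fieldType) (H : algType k).

Definition bilinear_form (b : H -> H -> k) :=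
  (forall a c x y, b (c *: x + y) a = c * b x a + b y a) /\
  (forall a c x y, b a (c *: x + y) = c * b a x + b a y).

Definition trilinear_form (b : H -> H -> H -> k) :=
  [/\ (forall a a' c x y, b (c *: x + y) a a' = c * b x a a' + b y a a'),
      (forall a a' c x y, b a (c *: x + y) a' = c * b a x a' + b a y a') &
      (forall a a' c x y, b a a' (c *: x + y) = c * b a a' x + b a a' y)].

Definition teq2 (s t : seq (H * H)) :=
  forall b, bilinear_form b ->
    \sum_(p <- s) b p.1 p.2 = \sum_(p <- t) b p.1 p.2.

Definition teq3 (s t : seq (H * H * H)) :=
  forall b, trilinear_form b ->
    \sum_(p <- s) b p.1.1 p.1.2 p.2 = \sum_(p <- t) b p.1.1 p.1.2 p.2.

Record hopf := Hopf {
  cop : H -> seq (H * H);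
  eps : H -> k;
  anti : H -> H;
  cop_lin : forall c x y,
    teq2 (cop (c *: x + y)) ([seq (c *: p.1, p.2) | p <- cop x] ++ cop y);
  cop_mul : forall x y,
    teq2 (cop (x * y)) [seq (p.1 * q.1, p.2 * q.2) | p <- cop x, q <- cop y];
  cop_one : teq2 (cop 1) [:: (1, 1)];
  coassoc : forall h,
    teq3 [seq (q.1, q.2, p.2) | p <- cop h, q <- cop p.1]
         [seq (p.1, q.1, q.2) | p <- cop h, q <- cop p.2];
  eps_lin : forall c x y, eps (c *: x + y) = c * eps x + eps y;
  eps_mul : forall x y, eps (x * y) = eps x * eps y;
  eps_one : eps 1 = 1;
  counitl : forall h, \sum_(p <- cop h) eps p.1 *: p.2 = h;
  counitr : forall h, \sum_(p <- cop h) eps p.2 *: p.1 = h;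
  anti_lin : forall c x y, anti (c *: x + y) = c *: anti x + anti y;
  antipodel : forall h, \sum_(p <- cop h) anti p.1 * p.2 = eps h *: 1;
  antipoder : forall h, \sum_(p <- cop h) p.1 * anti p.2 = eps h *: 1;
  anti_bij : bijective anti
}.

Record hmodType := HMod {
  hcar :> lmodType k;
  hact : H -> hcar -> hcar;
  hact_linl : forall m c x y, hact (c *: x + y) m = c *: hact x m + hact y m;
  hact_linr : forall h c x y, hact h (c *: x + y) = c *: hact h x + hact h y;
  hact1 : forall m, hact 1 m = m;
  hactM : forall x y m, hact (x * y) m = hact x (hact y m)
}.

Record hsubmod (M : hmodType) := HSub {
  spred :> {pred M};
  spred0 : 0 \in spred;
  spredD : forall c x y, x \in spred -> y \in spred -> c *: x + y \in spred;
  spredH : forall h x, x \in spred -> hact h x \in spred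
}.

Section Category.
Variable HS : hopf.

Definition Tconj (M : hmodType) (T : M -> M) (h : H) (m : M) : M :=
  \sum_(p <- cop HS h) hact p.1 (T (hact (anti HS p.2) m)).

(* (M, T) is an object of T(_H M): T is a linear projection satisfying the
   c-condition T_h o T = T o T_h for all h. *)
Definition is_obj (M : hmodType) (T : M -> M) : Prop :=
  [/\ (forall c x y, T (c *: x + y) = c *: T x + T y),
      (forall m, T (T m) = T m) &
      (forall h m, Tconj T h (T m) = T (Tconj T h m))].

Definition in_img (M : hmodType) (T : M -> M) (m : M) : Prop := exists x, m = T x.

(* f : M -> N represents a morphism (M,T) -> (N,S), i.e. the linear map
   T(M) -> S(N), m |-> f m (values of f outside T(M) are irrelevant),
   with f(T(h |> m)) = S(h |> f(m)) for h in H, m in T(M). *)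
Definition is_morph (M N : hmodType) (T : M -> M) (S : N -> N) (f : M -> N) : Prop :=
  [/\ (forall m, in_img T m -> in_img S (f m)),
      (forall c x y, in_img T x -> in_img T y -> f (c *: x + y) = c *: f x + f y) &
      (forall h m, in_img T m -> f (T (hact h m)) = S (hact h (f m)))].

Definition obj_iso (M N : hmodType) (T : M -> M) (S : N -> N) : Prop :=
  exists (f : M -> N) (g : N -> M),
    [/\ is_morph T S f, is_morph S T g,
        (forall m, in_img T m -> g (f m) = m) &
        (forall n, in_img S n -> f (g n) = n)].
End Category.
End HopfDef.

Section HmodFacts.
Variables (k : fieldType) (H : algType k) (M : hmodType H).

Lemma hact0l (m : M) : hact 0 m = 0.
Proof.
have := hact_linl m 1 0 0; rewrite scale1r !addr0 scale1r.
by move=> /(congr1 (fun z => z - hact 0 m)); rewrite addrK subrr => /esym.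
Qed.

Lemma hact0r (h : H) : hact h (0 : M) = 0.
Proof.
have := hact_linr h 1 (0 : M) 0; rewrite scale1r !addr0 scale1r.
by move=> /(congr1 (fun z => z - hact h 0)); rewrite addrK subrr => /esym.
Qed.

Lemma hactDr (h : H) (x y : M) : hact h (x + y) = hact h x + hact h y.
Proof. by have := hact_linr h 1 x y; rewrite !scale1r. Qed.

Lemma hactZl (c : k) (a : H) (m : M) : hact (c *: a) m = c *: hact a m.
Proof. by have := hact_linl m c a 0; rewrite !addr0 hact0l addr0. Qed.

Lemma hactBr (h : H) (x y : M) : hact h (x - y) = hact h x - hact h y.
Proof.
by have := hact_linr h (-1) y x; rewrite !scaleN1r addrC [_ + hact h x]addrC.
Qed.

Lemma hact_sumr (h : H) I (s : seq I) (F : I -> M) :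
  hact h (\sum_(i <- s) F i) = \sum_(i <- s) hact h (F i).
Proof. exact: (big_morph _ (hactDr h) (hact0r h)). Qed.

Variable N : hsubmod M.

Lemma spredD1 (x y : M) : x \in N -> y \in N -> x + y \in N.
Proof. by move=> xN yN; have := spredD 1 xN yN; rewrite scale1r. Qed.

Lemma spredZ (c : k) (x : M) : x \in N -> c *: x \in N.
Proof. by move=> xN; have := spredD c xN (spred0 N); rewrite addr0. Qed.

Lemma spredB (x y : M) : x \in N -> y \in N -> x - y \in N.
Proof. by move=> xN yN; have := spredD (-1) yN xN; rewrite scaleN1r addrC. Qed.
End HmodFacts.

Section GenSub.
Variables (k : fieldType) (H : algType k) (M : hmodType H) (T : M -> M).

Definition genP : pred M := fun x =>
  `[< exists s : seq (H * M), x = \sum_(p <- s) hact p.1 (T p.2) >].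

Lemma genP0 : genP 0.
Proof. by apply/asboolP; exists [::]; rewrite big_nil. Qed.

Lemma genP_lin c x y : genP x -> genP y -> genP (c *: x + y).
Proof.
move=> /asboolP [s ->] /asboolP [t ->]; apply/asboolP.
exists ([seq (c *: p.1, p.2) | p <- s] ++ t).
rewrite big_cat big_map scaler_sumr /=; congr (_ + _).
by apply: eq_bigr => p _; rewrite hactZl.
Qed.

Lemma genP_act h x : genP x -> genP (hact h x).
Proof.
move=> /asboolP [s ->]; apply/asboolP; exists [seq (h * p.1, p.2) | p <- s].
by rewrite big_map hact_sumr; apply: eq_bigr => p _; rewrite hactM.
Qed.

Lemma genP_T m : genP (T m).
Proof. by apply/asboolP; exists [:: (1, m)]; rewrite big_seq1 hact1. Qed.

Lemma genP_closed : GRing.subsemimod_closed genP.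
Proof.
split; first split.
- exact: genP0.
- by move=> x y xP yP; have := genP_lin 1 xP yP; rewrite scale1r.
- by move=> c x xP; have := genP_lin c xP genP0; rewrite addr0.
Qed.
End GenSub.

Record genT (k : fieldType) (H : algType k) (M : hmodType H) (T : M -> M) :=
  GenT { gval : M; gvalP : genP T gval }.

HB.instance Definition _ k H M T := [isSub for @gval k H M T].
HB.instance Definition _ k H M T := [Choice of @genT k H M T by <:].
HB.instance Definition _ (k : fieldType) (H : algType k) (M : hmodType H) T :=
  GRing.SubChoice_isSubLmodule.Build _ _ _ (@genT k H M T) (genP_closed T).

Section GenSubMod.
Variables (k : fieldType) (H : algType k) (M : hmodType H) (T : M -> M).

Definition gen_act (h : H) (x : genT T) : genT T := GenT (genP_act h (gvalP x)).

Lemma gen_linl m c x y :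
  gen_act (c *: x + y) m = c *: gen_act x m + gen_act y m.
Proof. by apply: val_inj; rewrite /= hact_linl. Qed.

Lemma gen_linr h c (x y : genT T) :
  gen_act h (c *: x + y) = c *: gen_act h x + gen_act h y.
Proof. by apply: val_inj; rewrite /= hact_linr. Qed.

Lemma gen_act1 m : gen_act 1 m = m.
Proof. by apply: val_inj; rewrite /= hact1. Qed.

Lemma gen_actM x y m : gen_act (x * y) m = gen_act x (gen_act y m).
Proof. by apply: val_inj; rewrite /= hactM. Qed.

Definition genMod : hmodType H :=
  HMod gen_linl gen_linr gen_act1 gen_actM.

Definition genRestr (x : genMod) : genMod := GenT (genP_T T (gval x)).
End GenSubMod.

(* The quotient H-module M/M' by an H-submodule M'.  Elements are the        *)
(* canonical representatives of the cosets x + M' (chosen by xchoose, which  *)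
(* depends only on the coset).                                              *)
Section Quot.
Variables (k : fieldType) (H : algType k) (M : hmodType H) (N : hsubmod M).

Lemma ex_canon (x : M) : exists y, (fun y => y - x \in N) y.
Proof. by exists x; rewrite subrr spred0. Qed.

Definition canon (x : M) : M := xchoose (ex_canon x).

Lemma canon_rel x : canon x - x \in N.
Proof. exact: (xchooseP (ex_canon x)). Qed.

Lemma canon_eq x y : x - y \in N -> canon x = canon y.
Proof.
move=> xy; apply: eq_xchoose => z; apply/idP/idP => zN.
- by have := spredD1 zN xy; rewrite addrA subrK.
- by have := spredB zN xy; rewrite opprB addrA subrK.
Qed.

Lemma canonK x : canon (canon x) = canon x.
Proof. exact/canon_eq/canon_rel. Qed.
End Quot.

Record quotT (k : fieldType) (H : algType k) (M : hmodType H) (N : hsubmod M) :=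
  QT { qval : M; qvalP : canon N qval == qval }.

HB.instance Definition _ k H M N := [isSub for @qval k H M N].
HB.instance Definition _ k H M N := [Choice of @quotT k H M N by <:].

Section QuotOps.
Variables (k : fieldType) (H : algType k) (M : hmodType H) (N : hsubmod M).

Definition qpi (x : M) : quotT N := QT (introT eqP (canonK N x)).

Lemma qpiE x y : x - y \in N -> qpi x = qpi y.
Proof. by move=> xy; apply: val_inj; rewrite /= (canon_eq xy). Qed.

Lemma qvalK (a : quotT N) : qpi (qval a) = a.
Proof. by apply: val_inj; rewrite /= (eqP (qvalP a)). Qed.

Lemma qval_pi x : qval (qpi x) = canon N x.
Proof. by []. Qed.

Lemma qpiDl u v : qpi (canon N u + v) = qpi (u + v).
Proof. by apply: qpiE; rewrite opprD addrACA subrr addr0 canon_rel. Qed.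

Lemma qpiDr u v : qpi (v + canon N u) = qpi (v + u).
Proof. by rewrite addrC qpiDl addrC. Qed.

Lemma qpiZ c u : qpi (c *: canon N u) = qpi (c *: u).
Proof. by apply: qpiE; rewrite -scalerBr spredZ // canon_rel. Qed.

Lemma qpiZD c u v : qpi (c *: canon N u + v) = qpi (c *: u + v).
Proof.
by apply: qpiE; rewrite opprD addrACA subrr addr0 -scalerBr spredZ // canon_rel.
Qed.

Lemma qpiN u : qpi (- canon N u) = qpi (- u).
Proof. by rewrite -!scaleN1r qpiZ. Qed.

Lemma qpiH h u : qpi (hact h (canon N u)) = qpi (hact h u).
Proof. by apply: qpiE; rewrite -hactBr spredH // canon_rel. Qed.

Lemma qpiHD h u v : qpi (hact h (canon N u) + v) = qpi (hact h u + v).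
Proof.
by apply: qpiE; rewrite opprD addrACA subrr addr0 -hactBr spredH // canon_rel.
Qed.

Definition qzero : quotT N := qpi 0.
Definition qopp (a : quotT N) : quotT N := qpi (- qval a).
Definition qadd (a b : quotT N) : quotT N := qpi (qval a + qval b).
Definition qscale (c : k) (a : quotT N) : quotT N := qpi (c *: qval a).

Lemma qaddA : associative qadd.
Proof. by move=> a b c; rewrite /qadd !qval_pi qpiDl qpiDr addrA. Qed.

Lemma qaddC : commutative qadd.
Proof. by move=> a b; rewrite /qadd addrC. Qed.

Lemma qadd0 : left_id qzero qadd.
Proof. by move=> a; rewrite /qadd /qzero qval_pi qpiDl add0r qvalK. Qed.

Lemma qaddN : left_inverse qzero qopp qadd.
Proof. by move=> a; rewrite /qadd /qopp qval_pi qpiDl addNr. Qed.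

HB.instance Definition _ := GRing.isZmodule.Build (quotT N) qaddA qaddC qadd0 qaddN.

Lemma qaddE (a b : quotT N) : a + b = qadd a b.
Proof. by []. Qed.

Lemma qscaleA a b v : qscale a (qscale b v) = qscale (a * b) v.
Proof. by rewrite /qscale qval_pi qpiZ scalerA. Qed.

Lemma qscale1 : left_id 1 qscale.
Proof. by move=> v; rewrite /qscale scale1r qvalK. Qed.

Lemma qscaleDr : right_distributive qscale +%R.
Proof.
by move=> a u v; rewrite !qaddE /qscale /qadd !qval_pi qpiZ qpiDl qpiDr scalerDr.
Qed.

Lemma qscaleDl v : {morph qscale^~ v : a b / a + b}.
Proof. by move=> a b; rewrite !qaddE /qscale /qadd !qval_pi qpiDl qpiDr scalerDl. Qed.

HB.instance Definition _ :=
  GRing.Zmodule_isLmodule.Build k (quotT N) qscaleA qscale1 qscaleDr qscaleDl.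

Lemma qscaleE c (a : quotT N) : c *: a = qscale c a.
Proof. by []. Qed.

Definition qact (h : H) (a : quotT N) : quotT N := qpi (hact h (qval a)).

Lemma qact_linl m c x y : qact (c *: x + y) m = c *: qact x m + qact y m.
Proof.
rewrite /qact !qaddE !qscaleE /qadd /qscale !qval_pi qpiDl qpiDr qpiZD.
by rewrite hact_linl.
Qed.

Lemma qact_linr h c (x y : quotT N) :
  qact h (c *: x + y) = c *: qact h x + qact h y.
Proof.
rewrite /qact !qaddE !qscaleE /qadd /qscale !qval_pi qpiH qpiDl qpiDr qpiZD.
by rewrite -hact_linr hactDr qpiHD -hactDr.
Qed.

Lemma qact1 m : qact 1 m = m.
Proof. by rewrite /qact hact1 qvalK. Qed.

Lemma qactM x y m : qact (x * y) m = qact x (qact y m).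
Proof. by rewrite /qact qval_pi qpiH hactM. Qed.

Definition quotMod : hmodType H := HMod qact_linl qact_linr qact1 qactM.

Definition quotInd (T : M -> M) (a : quotMod) : quotMod := qpi (T (qval a)).
End QuotOps.

Arguments genRestr {k H M} T x.
Arguments quotInd {k H M} N T a.

From HB Require Import structures.
From mathcomp Require Import all_boot all_order all_algebra.
From mathcomp Require Import boolp.
Local Open Scope ring_scope.
Import GRing.Theory.
Set Implicit Arguments.
Unset Strict Implicit.
Unset Printing Implicit Defensive.

(* Both isomorphisms are instances of one principle: an H-linear map phi with
   phi o T = S o phi which restricts to a bijection T(M) -> S(N) is an
   isomorphism (M,T) ~= (N,S).  Such a phi intertwines every T_h with S_h, so
   the axioms of an object can be pulled back along an injective phi and
   pushed forward along a surjective one.  The inclusion H |> T(M) -> M is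
   injective and the identity on T(M); the projection M -> M/M' is surjective,
   and since T kills M' the map x + M' |-> T(x) is well defined and inverts it
   on the images. *)

Lemma in_img_lin (k : fieldType) (H : algType k) (M : hmodType H) (T : M -> M)
    c x y :
  linear T -> in_img T x -> in_img T y -> in_img T (c *: x + y).
Proof. by move=> Tlin [a ->] [b ->]; exists (c *: a + b); rewrite Tlin. Qed.

Lemma obj_iso_sym (k : fieldType) (H : algType k) (M N : hmodType H)
    (T : M -> M) (S : N -> N) :
  obj_iso T S -> obj_iso S T.
Proof. by move=> [f [g [fM gM gfK fgK]]]; exists g, f. Qed.

Section Transport.
Variables (k : fieldType) (H : algType k) (HS : hopf H) (M N : hmodType H).
Variables (T : M -> M) (S : N -> N) (phi : {linear M -> N}).
Hypothesis phiH : forall h, {morph phi : x / hact h x}.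
Hypothesis phiT : {morph phi : x / T x >-> S x}.

Lemma Tconj_morph h : {morph phi : x / Tconj HS T h x >-> Tconj HS S h x}.
Proof.
move=> x; rewrite /Tconj (big_morph phi (linearD phi) (linear0 phi)).
by apply: eq_bigr => p _; rewrite phiH phiT phiH.
Qed.

Lemma is_obj_inj : injective phi -> is_obj HS S -> is_obj HS T.
Proof.
move=> phi_inj [Slin Sid Sc]; split.
- by move=> c x y; apply: phi_inj; rewrite phiT !linearP Slin !phiT.
- by move=> x; apply: phi_inj; rewrite !phiT Sid.
- by move=> h x; apply: phi_inj; rewrite Tconj_morph !phiT Tconj_morph Sc.
Qed.

Lemma is_obj_can (psi : N -> M) : cancel psi phi -> is_obj HS T -> is_obj HS S.
Proof.
move=> psiK [Tlin Tid Tc]; split.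
- by move=> c x y; rewrite -(psiK x) -(psiK y) -linearP -!phiT Tlin linearP.
- by move=> x; rewrite -(psiK x) -!phiT Tid.
- by move=> h x; rewrite -(psiK x) -phiT -!Tconj_morph -phiT Tc.
Qed.

Lemma obj_iso_morph (psi : N -> M) :
    linear T ->
    (forall n, in_img S n -> in_img T (psi n)) ->
    (forall m, in_img T m -> psi (phi m) = m) ->
    (forall n, in_img S n -> phi (psi n) = n) ->
  obj_iso T S.
Proof.
move=> Tlin psiT phiK psiK; exists phi, psi; split=> //.
- split=> [_ [x ->]|c x y _ _|h m _]; last by rewrite phiT phiH.
  + by exists (phi x); rewrite phiT.
  + exact: linearP.
- split=> [||h n Sn]; first exact: psiT.
  + move=> c x y Sx Sy.
    rewrite -[RHS]phiK; last exact: in_img_lin Tlin (psiT _ Sx) (psiT _ Sy).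
    by rewrite linearP !psiK.
  + rewrite -{1}(psiK _ Sn) -phiH -phiT phiK //.
    by exists (hact h (psi n)).
Qed.
End Transport.

Section Generated.
Variables (k : fieldType) (H : algType k) (HS : hopf H) (M : hmodType H).
Variable T : M -> M.

Lemma val_hact h : {morph (val : genMod T -> M) : x / hact h x}.
Proof. by []. Qed.

Lemma genRestr_obj : is_obj HS T -> is_obj HS (genRestr T).
Proof.
exact: (is_obj_inj (T := genRestr T) (phi := val) val_hact (fun=> erefl)
  val_inj).
Qed.

Hypotheses (Tlin : linear T) (Tid : forall m, T (T m) = T m).

Lemma genRestr_iso : obj_iso T (genRestr T).
Proof.
apply/obj_iso_sym.
apply: (obj_iso_morph (T := genRestr T) (phi := val) val_hact (fun=> erefl)
  (psi := fun m => GenT (genP_T T m))).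
- by move=> c x y; apply: val_inj; rewrite /= Tlin.
- move=> _ [x ->]; exists (GenT (genP_T T x)).
  by apply: val_inj; rewrite /= Tid.
- by move=> _ [x ->]; apply: val_inj; rewrite /= Tid.
- by move=> _ [x ->]; rewrite /= Tid.
Qed.
End Generated.

Section Quotient.
Variables (k : fieldType) (H : algType k) (HS : hopf H) (M : hmodType H).
Variable N : hsubmod M.

Lemma qpi_lin : linear (qpi N).
Proof.
by move=> c x y; rewrite qaddE qscaleE /qadd /qscale !qval_pi qpiDr qpiDl qpiZD.
Qed.

HB.instance Definition _ :=
  GRing.isLinear.Build k M (quotT N) *:%R (qpi N) qpi_lin.

Lemma qpi_hact h : {morph qpi N : x / hact h x >-> hact (h0 := quotMod N) h x}.
Proof. by move=> x; rewrite /= /qact qval_pi qpiH. Qed.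

Variable T : M -> M.
Hypotheses (Tlin : linear T) (TN : forall x, x \in N -> T x = 0).

Lemma T_qval_qpi x : T (qval (qpi N x)) = T x.
Proof.
rewrite -[qval _](subrK x) -[_ - x]scale1r Tlin TN ?scaler0 ?add0r //.
by rewrite qval_pi canon_rel.
Qed.

Lemma qpi_quotInd : {morph qpi N : x / T x >-> quotInd N T x}.
Proof. by move=> x; rewrite /quotInd T_qval_qpi. Qed.

Lemma quotInd_obj : is_obj HS T -> is_obj HS (quotInd N T).
Proof.
exact: (is_obj_can (N := quotMod N) (phi := qpi N) qpi_hact qpi_quotInd
  (@qvalK _ _ _ N)).
Qed.

Hypothesis Tid : forall m, T (T m) = T m.

Lemma quotInd_iso : obj_iso T (quotInd N T).
Proof.
apply: (obj_iso_morph (N := quotMod N) (phi := qpi N) qpi_hact qpi_quotInd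
  (psi := fun a => T (qval a))) => //.
- by move=> a _; exists (qval a).
- by move=> _ [x ->]; rewrite T_qval_qpi Tid.
- by move=> _ [a ->]; rewrite /quotInd T_qval_qpi Tid.
Qed.
End Quotient.

Theorem mainTheorem7 (k : fieldType) (H : algType k) (HS : hopf H)
    (M : hmodType H) (T : M -> M) :
  is_obj HS T ->
  (* (H |> T(M), T|) is an object of T(_H M), isomorphic to (M, T) *)
  (is_obj HS (genRestr T) /\ obj_iso T (genRestr T)) /\
  (* for an H-submodule M' of M with T(M') = 0, (M, T) ~= (M/M', T) *)
  (forall M' : hsubmod M, (forall x : M, x \in M' -> T x = 0) ->
     is_obj HS (quotInd M' T) /\ obj_iso T (quotInd M' T)).
Proof.
move=> objT; have [Tlin Tid _] := objT.
split; first by split; [exact: genRestr_obj | exact: genRestr_iso].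
by move=> M' TM'; split; [exact: quotInd_obj | exact: quotInd_iso].
Qed.
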